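(* Let $s,t$ be positive integers. Then $prc(K_{s,t})=\max\{s,t\}$.
   Context: $K_{s,t}$ is the complete bipartite graph with parts of sizes $s$ and $t$. A path in an edge-coloured graph is a rainbow path if its edges receive pairwise distinct colours. The proper rainbow connection number $prc(G)$ is the minimum number of colours in a proper edge-colouring (adjacent edges get distinct colours) such that every two distinct vertices are joined by a rainbow path. *)

From mathcomp Require Import all_boot.
Set Implicit Arguments. Unset Strict Implicit. Unset Printing Implicit Defensive.

Definition simple_graph (V : finType) (e : rel V) : Prop :=
  (forall x y, e x y = e y x) /\ (forall x, ~~ e x x).

Definition edge_colouring (V : finType) (e : rel V) (k : nat)
  (c : V -> V -> 'I_k) : Prop :=
  forall x y, e x y -> c x y = c y x.

Definition proper_colouring (V : finType) (e : rel V) (k : nat)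
  (c : V -> V -> 'I_k) : Prop :=
  forall x y z, e x y -> e x z -> y != z -> c x y != c x z.

Definition rainbow_path (V : finType) (e : rel V) (k : nat)
  (c : V -> V -> 'I_k) (x y : V) (p : seq V) : Prop :=
  [/\ path e x p, last x p = y, uniq (x :: p) & uniq (pairmap c x p)].

Definition rainbow_connected (V : finType) (e : rel V) (k : nat)
  (c : V -> V -> 'I_k) : Prop :=
  forall x y, x != y -> exists p, rainbow_path e c x y p.

Definition proper_rainbow_colouring (V : finType) (e : rel V) (k : nat)
  (c : V -> V -> 'I_k) : Prop :=
  [/\ edge_colouring e c, proper_colouring e c & rainbow_connected e c].

Definition is_prc (V : finType) (e : rel V) (n : nat) : Prop :=
  (exists c : V -> V -> 'I_n, proper_rainbow_colouring e c) /\
  (forall (k : nat) (c : V -> V -> 'I_k), proper_rainbow_colouring e c -> n <= k).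

Definition Kbip (s t : nat) : rel ('I_s + 'I_t) :=
  fun u v => match u, v with
             | inl _, inr _ | inr _, inl _ => true
             | _, _ => false
             end.

From mathcomp Require Import all_boot.

Set Implicit Arguments.
Unset Strict Implicit.
Unset Printing Implicit Defensive.

(* A proper colouring is injective on the edges at a vertex, so it needs at
   least as many colours as the maximum degree, which is max(s, t) for
   K_{s,t}.  Conversely, colouring the edge between the i-th and the j-th
   vertex of the two sides by the entry (i, j) of a Latin rectangle, e.g.
   (i + j) mod max(s, t), is proper, and any two vertices on the same side
   are joined through a vertex of the other side by a path of length two
   whose two colours lie in one row (or column) of the rectangle, hence
   differ. *)

Lemma proper_colouring_degree (V : finType) (e : rel V) (k : nat)
    (c : V -> V -> 'I_k) :
  proper_colouring e c -> forall x, #|e x| <= k.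
Proof.
move=> proper_c x.
have c_inj : {in e x &, injective (c x)}.
  by move=> y z exy exz /eqP; apply: contraTeq; apply: proper_c.
by rewrite -(card_in_imset c_inj) (leq_trans (max_card _)) ?card_ord.
Qed.

Lemma Kbip_degree_inr (s t : nat) (j : 'I_t) : #|@Kbip s t (inr j)| = s.
Proof.
have nbhd : @Kbip s t (inr j) =i [set inl i | i : 'I_s].
  by case=> i /=; [rewrite imset_f | apply/esym/imsetP => -[]].
by rewrite (eq_card nbhd) card_imset ?card_ord //; exact: inl_inj.
Qed.

Lemma Kbip_degree_inl (s t : nat) (i : 'I_s) : #|@Kbip s t (inl i)| = t.
Proof.
have nbhd : @Kbip s t (inl i) =i [set inr j | j : 'I_t].
  by case=> j /=; [apply/esym/imsetP => -[] | rewrite imset_f].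
by rewrite (eq_card nbhd) card_imset ?card_ord //; exact: inr_inj.
Qed.

Section LatinRectangleColouring.

Variables (s t n : nat) (i0 : 'I_s) (j0 : 'I_t) (L : 'I_s -> 'I_t -> 'I_n).
Hypotheses (L_row : forall i, injective (L i)) (L_col : forall j, injective (L^~ j)).

(* Non-edges receive the irrelevant colour [L i0 j0]. *)
Definition latin_colouring (u v : 'I_s + 'I_t) : 'I_n :=
  match u, v with
  | inl i, inr j | inr j, inl i => L i j
  | _, _ => L i0 j0
  end.

Lemma latin_edge_colouring : edge_colouring (@Kbip s t) latin_colouring.
Proof. by case=> x [] y. Qed.

Lemma latin_proper_colouring : proper_colouring (@Kbip s t) latin_colouring.
Proof.
case=> x [] y // [] z // _ _ yz /=.
- by apply: contra yz => /eqP /L_row ->.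
- by apply: contra yz => /eqP /L_col ->.
Qed.

Lemma latin_rainbow_connected : rainbow_connected (@Kbip s t) latin_colouring.
Proof.
case=> x [] y xy.
- exists [:: inr j0; inl y]; split => //=.
    by rewrite !inE andbT; apply/norP; split.
  by rewrite !inE andbT (inj_eq (@L_col j0)); apply: contra xy => /eqP ->.
- by exists [:: inr y]; split => //=; rewrite !inE.
- by exists [:: inl y]; split => //=; rewrite !inE.
- exists [:: inl i0; inr y]; split => //=.
    by rewrite !inE andbT; apply/norP; split.
  by rewrite !inE andbT (inj_eq (@L_row i0)); apply: contra xy => /eqP ->.
Qed.

Lemma latin_proper_rainbow_colouring :
  proper_rainbow_colouring (@Kbip s t) latin_colouring.
Proof.
split; [exact: latin_edge_colouring | exact: latin_proper_colouring
       | exact: latin_rainbow_connected].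
Qed.

End LatinRectangleColouring.

Lemma modnDl_small_inj (n i j j' : nat) :
  j < n -> j' < n -> (i + j) %% n = (i + j') %% n -> j = j'.
Proof. by move=> lt_jn lt_j'n /eqP; rewrite eqn_modDl !modn_small // => /eqP. Qed.

Definition cyclic_latin (s t n : nat) (n_gt0 : 0 < n) (i : 'I_s) (j : 'I_t) : 'I_n :=
  Ordinal (ltn_pmod (i + j) n_gt0).

Lemma cyclic_latin_row (s t n : nat) (n_gt0 : 0 < n) :
  t <= n -> forall i, injective (@cyclic_latin s t n n_gt0 i).
Proof.
move=> le_tn i j j' /(congr1 val) /= eq_ij; apply/val_inj; move: eq_ij.
by apply: modnDl_small_inj; apply: leq_trans le_tn.
Qed.

Lemma cyclic_latin_col (s t n : nat) (n_gt0 : 0 < n) :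
  s <= n -> forall j, injective ((@cyclic_latin s t n n_gt0)^~ j).
Proof.
move=> le_sn j i i' /(congr1 val) /=; rewrite ![(_ + j)%N]addnC => eq_ij.
apply/val_inj; move: eq_ij.
by apply: modnDl_small_inj; apply: leq_trans le_sn.
Qed.

Theorem theorem5p3 (s t : nat) (hs : 0 < s) (ht : 0 < t) :
  is_prc (@Kbip s t) (maxn s t).
Proof.
have n_gt0 : 0 < maxn s t by rewrite leq_max hs.
split.
  exists (latin_colouring (Ordinal hs) (Ordinal ht) (cyclic_latin n_gt0)).
  apply: latin_proper_rainbow_colouring.
  - exact: cyclic_latin_row (leq_maxr s t).
  - exact: cyclic_latin_col (leq_maxl s t).
move=> k c [_ proper_c _].
have := proper_colouring_degree proper_c (inr (Ordinal ht)).
have := proper_colouring_degree proper_c (inl (Ordinal hs)).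
by rewrite Kbip_degree_inr Kbip_degree_inl geq_max => -> ->.
Qed.
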